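(* Let $q$ be a rational number in $[0,1]$. Then there is an expression $q=\frac mn$ (with $m$ a nonnegative integer and $n$ a positive integer) where $n=2^rs$ with $s$ odd and $2^r\ge s-1$; and for any such expression, $\mathbb{Q}[C_n]$ contains a projection $e$ (i.e. $e=e^*=e^2$) with $\mathrm{tr}_{C_n}(e)=q$ and $ne\in\mathbb{Z}[C_n]$.
   Context: $C_n$ denotes a cyclic group of order $n$. For $a\in\mathbb{Q}[C_n]$, $\mathrm{tr}_{C_n}(a)$ is the coefficient of the identity element in $a$; the involution is $(\sum a_g g)^*=\sum \overline{a_g}g^{-1}$. *)

(* The group algebra Q[C_n] is modelled as the space of
   coefficient functions {ffun 'I_n -> rat}, where the ordinal k : 'I_n stands
   for g^k, g a fixed generator of the cyclic group C_n (so g^i g^j = g^((i+j) mod n)). *)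
From HB Require Import structures.
From mathcomp Require Import all_boot all_order all_algebra.
Set Implicit Arguments. Unset Strict Implicit. Unset Printing Implicit Defensive.
Import Order.TTheory GRing.Theory Num.Theory.
Local Open Scope ring_scope.

Definition gmul (n : nat) (a b : {ffun 'I_n -> rat}) : {ffun 'I_n -> rat} :=
  [ffun k : 'I_n => \sum_(i < n) \sum_(j < n)
      (if ((i + j) %% n == k)%N then a i * b j else 0)].

(* involution: (sum a_g g)^* = sum conj(a_g) g^{-1}; conjugation is trivial
   on rationals, and (g^i)^{-1} = g^k with i + k = 0 mod n. *)
Definition gstar (n : nat) (a : {ffun 'I_n -> rat}) : {ffun 'I_n -> rat} :=
  [ffun k : 'I_n => \sum_(i < n) (if ((i + k) %% n == 0)%N then a i else 0)].

Definition gtr (n : nat) (a : {ffun 'I_n -> rat}) : rat :=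
  \sum_(i < n | (i == 0 :> nat)) a i.

Definition gintegral (n : nat) (a : {ffun 'I_n -> rat}) : Prop :=
  forall i : 'I_n, exists z : int, a i = z%:~R.

Definition gscale (n : nat) (c : rat) (a : {ffun 'I_n -> rat}) : {ffun 'I_n -> rat} :=
  [ffun k : 'I_n => c * a k].

(* Let zeta be a primitive n-th root of unity. The maps a |-> a(zeta^t), t < n,
   are multiplicative and jointly injective on Q[C_n] (Fourier inversion), so an
   element all of whose values a(zeta^t) lie in {0, 1} is idempotent.  For d | n
   the average P_d = (d/n) sum_j g^(dj) over the subgroup generated by g^d takes
   the value [n | t d] at zeta^t, is self-adjoint, has trace d/n, and n P_d is
   integral.

   Write n = 2^r s with s odd and, for 0/1-sequences c, c' vanishing beyond r,
   put e = sum_(i <= r) (c_i - c_(i+1)) P_(2^i) + (c'_i - c'_(i+1)) (P_(2^i s) - P_(2^i)).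
   At zeta^t, P_(2^i s) and P_(2^i) take the values [2^r | t 2^i] and
   [2^r | t 2^i][s | t]; the former is monotone in i, so the value of e
   telescopes to one entry of c (if s | t) or of c' (otherwise).
   The trace of e is (k + (s-1) k')/n with k = sum_i (c_i - c_(i+1)) 2^i, and
   every k <= 2^r arises this way; as 2^r >= s - 1, every m <= n splits as
   k + (s-1) k' with k, k' <= 2^r.  For the existence of such fractions, write
   the denominator of q as 2^a s and multiply numerator and denominator by 2^s. *)

From mathcomp Require Import all_boot all_algebra all_field.
From mathcomp Require Import ring zify.
Set Implicit Arguments. Unset Strict Implicit. Unset Printing Implicit Defensive.
Import GRing.Theory Num.Theory.
Local Open Scope ring_scope.

Lemma sum_expr_root1 (R : idomainType) (w : R) N :
  w ^+ N = 1 -> \sum_(i < N) w ^+ i = if w == 1 then N%:R else 0.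
Proof.
case: eqP => [-> _ | /eqP w_neq1 wN1].
  by rewrite (eq_bigr (fun _ => 1)) ?sumr_const ?card_ord // => i _; rewrite expr1n.
have /eqP := subrX1 w N; rewrite wN1 subrr eq_sym mulf_eq0 subr_eq0.
by rewrite (negbTE w_neq1) => /eqP.
Qed.

Lemma sum_dvdn_nat (V : nmodType) (F : nat -> V) N d : (0 < d)%N ->
  \sum_(0 <= k < N * d | (d %| k)%N) F k = \sum_(0 <= j < N) F (j * d)%N.
Proof.
move=> d_gt0; rewrite big_mkcond big_nat_mul; apply: eq_bigr => j _.
rewrite big_ltn ?ltn_mul2r ?d_gt0 ?ltnSn // dvdn_mull // big_nat_cond big1 => [|k].
  exact: addr0.
move=> /andP[/andP[jd_lt_k k_lt] _]; case: ifP => // /dvdnP[c def_k].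
by move: jd_lt_k k_lt; rewrite def_k !ltn_mul2r d_gt0 /=; lia.
Qed.

Lemma ord_dvdn_addr_inj n (i j : 'I_n) k : (n %| i + k)%N -> (n %| j + k)%N -> i = j.
Proof.
rewrite /dvdn => /eqP ik0 /eqP jk0; apply: val_inj; apply/eqP => /=.
by rewrite -(modn_small (ltn_ord i)) -(modn_small (ltn_ord j)) -(eqn_modDr k) ik0 jk0.
Qed.

Definition geval n (z : algC) (a : {ffun 'I_n -> rat}) : algC :=
  \sum_(k < n) ratr (a k) * z ^+ k.

Section Geval.
Variable n : nat.
Implicit Types (z : algC) (a b : {ffun 'I_n -> rat}).

Lemma geval0 z : geval z (0 : {ffun 'I_n -> rat}) = 0.
Proof. by rewrite /geval big1 // => k _; rewrite ffunE rmorph0 mul0r. Qed.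

Lemma gevalD z a b : geval z (a + b) = geval z a + geval z b.
Proof. by rewrite /geval -big_split; apply: eq_bigr => k _; rewrite ffunE rmorphD mulrDl. Qed.

Lemma gevalB z a b : geval z (a - b) = geval z a - geval z b.
Proof.
rewrite /geval -sumrB; apply: eq_bigr => k _.
by rewrite !ffunE rmorphB mulrBl.
Qed.

Lemma geval_scale z c a : geval z (gscale c a) = ratr c * geval z a.
Proof. by rewrite /geval mulr_sumr; apply: eq_bigr => k _; rewrite ffunE rmorphM mulrA. Qed.

Lemma geval_sum z m (F : 'I_m -> {ffun 'I_n -> rat}) :
  geval z (\sum_(i < m) F i) = \sum_(i < m) geval z (F i).
Proof. exact: (big_morph _ (gevalD z) (geval0 z)). Qed.

Lemma geval_gmul z a b : z ^+ n = 1 -> geval z (gmul a b) = geval z a * geval z b.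
Proof.
case: n a b => [|n'] a b zn1; first by rewrite /geval !big_ord0 mul0r.
rewrite /geval big_distrlr /=.
transitivity (\sum_(k < n'.+1) \sum_(i < n'.+1) \sum_(j < n'.+1)
  (if ((i + j) %% n'.+1 == k)%N then ratr (a i) * ratr (b j) * z ^+ k else 0)).
  apply: eq_bigr => k _; rewrite ffunE rmorph_sum mulr_suml; apply: eq_bigr => i _.
  rewrite rmorph_sum mulr_suml; apply: eq_bigr => j _.
  by case: eqP => _; rewrite ?rmorphM ?rmorph0 ?mul0r.
rewrite exchange_big; apply: eq_bigr => i _; rewrite exchange_big; apply: eq_bigr => j _.
rewrite (bigD1 (Ordinal (ltn_pmod (i + j) (ltn0Sn n')))) //= eqxx big1 => [|k k_neq].
  by rewrite addr0 expr_mod // exprD mulrACA.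
by rewrite ifN_eq //; apply: contra k_neq => /eqP k_eq; apply/eqP/val_inj.
Qed.

Variable zeta : algC.
Hypothesis zeta_prim : n.-primitive_root zeta.

Lemma sum_prim_root_exp m :
  \sum_(t < n) zeta ^+ (m * t) = if (n %| m)%N then n%:R else 0.
Proof.
under eq_bigr do rewrite exprM.
by rewrite sum_expr_root1 -?(prim_order_dvd zeta_prim) // -exprM mulnC exprM
  (prim_expr_order zeta_prim) expr1n.
Qed.

Lemma geval_inversion a (k : 'I_n) :
  \sum_(t < n) geval (zeta ^+ t) a * zeta ^+ ((n - k) * t) = n%:R * ratr (a k).
Proof.
transitivity (\sum_(j < n) ratr (a j) * \sum_(t < n) zeta ^+ ((j + (n - k)) * t)).
  rewrite /geval; under eq_bigr do rewrite mulr_suml.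
  rewrite exchange_big; apply: eq_bigr => j _; rewrite mulr_sumr; apply: eq_bigr => t _.
  by rewrite -mulrA -exprM -exprD mulnDl mulnC.
have dvd_k: (n %| k + (n - k))%N by rewrite subnKC ?dvdnn // ltnW.
rewrite (bigD1 k) //= sum_prim_root_exp dvd_k big1 ?addr0 1?mulrC //.
move=> j j_neq_k; rewrite sum_prim_root_exp; case: ifP => [dvd_j|]; last by rewrite mulr0.
by case/eqP: j_neq_k; apply: ord_dvdn_addr_inj dvd_j dvd_k.
Qed.

Lemma geval_inj a b :
  (forall t : 'I_n, geval (zeta ^+ t) a = geval (zeta ^+ t) b) -> a = b.
Proof.
move=> eq_ab; apply/ffunP => k; apply: (@fmorph_inj _ _ (@ratr algC)).
have n_neq0 : n%:R != 0 :> algC by rewrite pnatr_eq0 -lt0n (prim_order_gt0 zeta_prim).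
apply: (mulfI n_neq0); rewrite -!geval_inversion.
by apply: eq_bigr => t _; rewrite eq_ab.
Qed.

End Geval.

Definition gavg n d : {ffun 'I_n -> rat} :=
  [ffun k : 'I_n => if (d %| k)%N then d%:R / n%:R else 0].

Section Gavg.
Variables n d : nat.
Hypothesis d_dvd_n : (d %| n)%N.

Lemma gavg_sym (i k : 'I_n) : (n %| i + k)%N -> gavg n d i = gavg n d k.
Proof.
move=> /(dvdn_trans d_dvd_n) d_dvd_ik; rewrite !ffunE.
suff -> : (d %| i)%N = (d %| k)%N by [].
by apply/idP/idP => [d_i | d_k]; [rewrite -(dvdn_addr _ d_i) | rewrite -(dvdn_addl _ d_k)].
Qed.

Lemma natr_mul_gavg (k : 'I_n) : n%:R * gavg n d k = if (d %| k)%N then d%:R else 0.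
Proof.
have n_gt0 : (0 < n)%N by case: n k => [[]|].
by rewrite ffunE; case: ifP; rewrite ?mulr0 // mulrC divfK // pnatr_eq0 -lt0n.
Qed.

Lemma geval_gavg (zeta : algC) t : n.-primitive_root zeta ->
  geval (zeta ^+ t) (gavg n d) = (n %| t * d)%:R.
Proof.
move=> zeta_prim; have n_gt0 := prim_order_gt0 zeta_prim.
have d_gt0 : (0 < d)%N := dvdn_gt0 n_gt0 d_dvd_n.
transitivity (d%:R / n%:R * \sum_(0 <= j < n %/ d) zeta ^+ t ^+ (j * d)).
  rewrite -sum_dvdn_nat // divnK // big_mkord big_mkcond mulr_sumr.
  apply: eq_bigr => k _; rewrite ffunE; case: ifP => _; last by rewrite rmorph0 !mul0r mulr0.
  by rewrite fmorph_div !rmorph_nat.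
under eq_bigr do rewrite mulnC exprM.
have root1 : zeta ^+ t ^+ d ^+ (n %/ d) = 1.
  by rewrite -!exprM (mulnC d) divnK // mulnC exprM (prim_expr_order zeta_prim) expr1n.
rewrite big_mkord (sum_expr_root1 root1) -exprM -(prim_order_dvd zeta_prim).
case: ifP => _; last by rewrite mulr0.
by rewrite natf_div // -invf_div mulVf // mulf_neq0 ?invr_eq0 // pnatr_eq0 -lt0n.
Qed.
End Gavg.

Definition jump (g : nat -> bool) i : int := (g i)%:Z - (g i.+1)%:Z.

Lemma sum_jump_exp2 r k : (k <= 2 ^ r)%N -> exists g : nat -> bool,
  (forall i, (r < i)%N -> g i = false) /\ k%:Z = \sum_(i < r.+1) jump g i * 2 ^+ i.
Proof.
elim: r k => [|r IHr] k le_k_2r.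
  exists (fun i => (i == 0)%N && (k == 1)%N); split; first by case.
  by rewrite big_ord1 /jump /= mulr1 subr0; case: k le_k_2r => [|[|]].
have [le_k_2r' | lt_2r_k] := leqP k (2 ^ r).
  have [g [g_gt ->]] := IHr k le_k_2r'; exists g; split => [i lt_ri | ].
    by apply: g_gt; apply: ltnW.
  have jump_r1 : jump g r.+1 = 0 by rewrite /jump !g_gt.
  by rewrite [RHS]big_ord_recr /= jump_r1 mul0r addr0.
have [|g [g_gt g_sum]] := IHr (k - 2 ^ r)%N; first by rewrite expnS in le_k_2r; lia.
(* Switching g on at r + 1 adds 2^(r+1) - 2^r = 2^r to the sum. *)
set g' := fun i => (i == r.+1) || g i.
exists g'; split => [i lt_ri | ].
  by rewrite /g' g_gt ?orbF; [apply: gtn_eqF | apply: ltnW].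
have jump_lt (i : 'I_r) : jump g' i = jump g i.
  by rewrite /jump /g' !ltn_eqF // ltnS // ltnW.
have jump_r : jump g' r = jump g r - 1.
  by rewrite /jump /g' eqxx ltn_eqF // (g_gt r.+1) // subr0.
have jump_r1 : jump g' r.+1 = 1.
  by rewrite /jump /g' eqxx gtn_eqF // (g_gt r.+2) // ltnW.
rewrite 2!big_ord_recr /= jump_r jump_r1.
under eq_bigr do rewrite jump_lt.
move: g_sum; rewrite big_ord_recr /= -subzn 1?ltnW // => /(canRL (subrK _)) ->.
by rewrite -[Posz (2 ^ r)]natz natrX exprS; ring.
Qed.

Lemma sum_jump_threshold (R : pzRingType) (g : nat -> bool) I N :
  \sum_(i < N) (jump g i)%:~R * (I <= i)%:R = (g (minn I N))%:R - (g N)%:R :> R.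
Proof.
rewrite -(big_mkord xpredT (fun i => (jump g i)%:~R * (I <= i)%:R)).
rewrite (big_cat_nat (leq0n _) (geq_minr I N)) /= big_nat_cond big1 ?add0r.
  rewrite big_nat_cond (eq_bigr (fun i => - ((g i.+1)%:R - (g i)%:R))).
    by rewrite -big_nat_cond sumrN telescope_sumr ?geq_minr // opprB.
  move=> i /andP[/andP[min_le_i lt_iN] _].
  have -> : (I <= i)%N by move: min_le_i lt_iN; lia.
  by rewrite mulr1 /jump intrB -!pmulrn opprB.
move=> i /andP[/andP[_ lt_i_min] _].
by move: lt_i_min; rewrite leq_min => /andP[/ltn_geF-> _]; rewrite mulr0.
Qed.

Lemma dvdn_exp_threshold p r t : prime p ->
  exists I, forall i, (p ^ r %| t * p ^ i)%N = (I <= i)%N.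
Proof.
move=> p_prime; have p_gt0 := prime_gt0 p_prime.
have [-> | t_gt0] := posnP t; first by exists 0%N => i; rewrite mul0n dvdn0.
exists (r - logn p t)%N => i.
by rewrite pfactor_dvdn ?lognM ?muln_gt0 ?expn_gt0 ?t_gt0 ?p_gt0 // pfactorK // leq_subLR.
Qed.

Definition jump_proj r s (g1 g2 : nat -> bool) : {ffun 'I_(2 ^ r * s) -> rat} :=
  \sum_(i < r.+1) (gscale (jump g1 i)%:~R (gavg _ (2 ^ i))
    + gscale (jump g2 i)%:~R (gavg _ (2 ^ i * s) - gavg _ (2 ^ i))).

Section JumpProj.
Variables (r s : nat) (g1 g2 : nat -> bool).
Hypothesis s_odd : odd s.
Local Notation n := (2 ^ r * s)%N.
Local Notation e := (jump_proj r s g1 g2).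

Let n_gt0 : (0 < n)%N. Proof. by rewrite muln_gt0 expn_gt0 (odd_gt0 s_odd). Qed.

Lemma exp2_dvdn i : (i < r.+1)%N -> (2 ^ i %| n)%N.
Proof. by move=> lt_ir; rewrite dvdn_mulr // dvdn_exp2l. Qed.

Lemma exp2_mul_dvdn i : (i < r.+1)%N -> (2 ^ i * s %| n)%N.
Proof. by move=> lt_ir; rewrite dvdn_mul // dvdn_exp2l. Qed.

Lemma jump_projE k : e k = \sum_(i < r.+1) ((jump g1 i)%:~R * gavg n (2 ^ i) k
  + (jump g2 i)%:~R * (gavg n (2 ^ i * s) k - gavg n (2 ^ i) k)).
Proof. by rewrite sum_ffunE; apply: eq_bigr => i _; rewrite !ffunE. Qed.

Lemma gstar_jump_proj : gstar e = e.
Proof.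
apply/ffunP => k; rewrite ffunE.
pose k' := Ordinal (ltn_pmod (n - k) n_gt0).
have dvd_k'k : (n %| k' + k)%N by rewrite /dvdn modnDml subnK ?modnn // ltnW.
rewrite (bigD1 k') -/(dvdn _ _) ?dvd_k'k //= big1 => [|j /negPf j_neq_k'].
  rewrite addr0 !jump_projE; apply: eq_bigr => i _.
  rewrite !(gavg_sym (exp2_dvdn (ltn_ord i)) dvd_k'k).
  by rewrite (gavg_sym (exp2_mul_dvdn (ltn_ord i)) dvd_k'k).
case: ifP => // dvd_jk.
by rewrite (ord_dvdn_addr_inj dvd_jk dvd_k'k) eqxx in j_neq_k'.
Qed.

Lemma jump_proj_integral k : n%:R * e k \is a Num.int.
Proof.
rewrite jump_projE mulr_sumr rpred_sum // => i _.
rewrite mulrDr !(mulrCA (n%:R : rat)) mulrBr.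
rewrite !natr_mul_gavg ?exp2_dvdn ?exp2_mul_dvdn //.
by rewrite rpredD ?rpredM ?rpredB ?rpred_int //; case: ifP; rewrite ?rpred_nat ?rpred0.
Qed.

Lemma gtr_jump_proj : n%:R * gtr e = \sum_(i < r.+1) (jump g1 i)%:~R * 2 ^+ i
  + (s%:R - 1) * \sum_(i < r.+1) (jump g2 i)%:~R * 2 ^+ i.
Proof.
rewrite /gtr (big_pred1 (Ordinal n_gt0)) => [|i]; last by rewrite /= -val_eqE.
rewrite jump_projE !mulr_sumr -big_split; apply: eq_bigr => i _ /=.
rewrite mulrDr !(mulrCA (n%:R : rat)) mulrBr.
rewrite !natr_mul_gavg ?exp2_dvdn ?exp2_mul_dvdn // !dvdn0 natrM natrX; ring.
Qed.

Lemma dvdn_mul_exp2 t i : (n %| t * 2 ^ i)%N = (2 ^ r %| t * 2 ^ i)%N && (s %| t)%N.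
Proof.
have s_coprime_2i : coprime s (2 ^ i) by rewrite coprimeXr ?coprimen2.
by rewrite Gauss_dvd ?coprimeXl ?coprime2n // (Gauss_dvdl t s_coprime_2i).
Qed.

Lemma dvdn_mul_exp2_odd t i : (n %| t * (2 ^ i * s))%N = (2 ^ r %| t * 2 ^ i)%N.
Proof. by rewrite mulnA dvdn_pmul2r ?odd_gt0. Qed.

Lemma geval_jump_proj zeta t : n.-primitive_root zeta ->
  g1 r.+1 = false -> g2 r.+1 = false -> exists b : bool, geval (zeta ^+ t) e = b%:R.
Proof.
move=> zeta_prim g1_r g2_r; have [I dvd_I] := dvdn_exp_threshold r t (isT : prime 2).
rewrite geval_sum.
under eq_bigr => i _.
  rewrite gevalD !geval_scale gevalB !(geval_gavg _ t zeta_prim) ?exp2_dvdn ?exp2_mul_dvdn //.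
  rewrite dvdn_mul_exp2 dvdn_mul_exp2_odd dvd_I !rmorph_int.
  over.
case: (s %| t)%N => /=.
  exists (g1 (minn I r.+1)); have := sum_jump_threshold algC g1 I r.+1; rewrite g1_r subr0 => <-.
  by apply: eq_bigr => i _; rewrite andbT subrr mulr0 addr0.
exists (g2 (minn I r.+1)); have := sum_jump_threshold algC g2 I r.+1; rewrite g2_r subr0 => <-.
by apply: eq_bigr => i _; rewrite andbF mulr0 add0r subr0.
Qed.

Lemma gmul_jump_proj : g1 r.+1 = false -> g2 r.+1 = false -> gmul e e = e.
Proof.
move=> g1_r g2_r; have [zeta zeta_prim] := C_prim_root_exists n_gt0.
apply: (geval_inj zeta_prim) => t.
rewrite geval_gmul; last by rewrite -exprM mulnC exprM (prim_expr_order zeta_prim) expr1n.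
by have [[] ->] := geval_jump_proj t zeta_prim g1_r g2_r; rewrite ?mulr1 ?mulr0.
Qed.

End JumpProj.

Lemma decomp_leq_mul m a s : (s - 1 <= a)%N -> (m <= a * s)%N ->
  exists k1 k2, [/\ k1 <= a, k2 <= a & m = k1 + (s - 1) * k2]%N.
Proof.
move=> s_le ms_le; have [s_le1 | s_gt1] := leqP s 1.
  by exists m, 0%N; split; nia.
have [le_a_div | lt_div_a] := leqP a (m %/ (s - 1)).
  have le_m : (a * (s - 1) <= m)%N by rewrite -leq_divRL ?subn_gt0.
  by exists (m - (s - 1) * a)%N, a; split; nia.
exists (m %% (s - 1))%N, (m %/ (s - 1))%N; split; [|lia|by rewrite addnC mulnC -divn_eq].
by have := @ltn_pmod m (s - 1); lia.
Qed.

Lemma exists_dyadic_odd_fraction (q : rat) : 0 <= q -> exists m n r s : nat,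
  [/\ (0 < n)%N, q = m%:R / n%:R, n = (2 ^ r * s)%N, odd s & (s - 1 <= 2 ^ r)%N].
Proof.
move=> q_ge0.
have num_eq : numq q = `|numq q|%N :> int by rewrite gez0_abs ?numq_ge0.
have den_eq : denq q = `|denq q|%N :> int by rewrite gtz0_abs ?denq_gt0.
set A := `|numq q|%N in num_eq *; set B := `|denq q|%N in den_eq *.
have B_gt0 : (0 < B)%N by rewrite -ltz_nat -den_eq denq_gt0.
have [s s_coprime B_eq] := pfactor_coprime (isT : prime 2) B_gt0.
set r := logn 2 B in B_eq; have s_odd : odd s by rewrite -coprime2n.
exists (A * 2 ^ s)%N, (2 ^ (r + s) * s)%N, (r + s)%N, s; split => //.
- by rewrite muln_gt0 expn_gt0 (odd_gt0 s_odd).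
- rewrite -[q in LHS]divq_num_den num_eq den_eq B_eq -!pmulrn expnD !natrM.
  by field; rewrite ?pnatr_eq0 ?expn_eq0 -?lt0n ?(odd_gt0 s_odd).
- by rewrite expnD; have := ltn_expl s (isT : 1 < 2)%N; nia.
Qed.

Theorem lemma5p1 (q : rat) (hq : 0 <= q <= 1) :
  (exists m n r s : nat,
      (0 < n)%N /\ q = m%:R / n%:R /\ n = (2 ^ r * s)%N /\ odd s /\ (s - 1 <= 2 ^ r)%N)
  /\
  (forall m n r s : nat,
      (0 < n)%N -> q = m%:R / n%:R -> n = (2 ^ r * s)%N -> odd s -> (s - 1 <= 2 ^ r)%N ->
      exists e : {ffun 'I_n -> rat},
        e = gstar e /\ e = gmul e e /\ gtr e = q /\ gintegral (gscale n%:R e)).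
Proof.
have [q_ge0 q_le1] := andP hq; split.
  have [m [n [r [s [n_gt0 def_q def_n s_odd s_le]]]]] := exists_dyadic_odd_fraction q_ge0.
  by exists m, n, r, s.
move=> m n r s n_gt0 def_q def_n s_odd s_le; subst n.
have n_neq0 : (2 ^ r * s)%:R != 0 :> rat by rewrite pnatr_eq0 -lt0n.
have m_le : (m <= 2 ^ r * s)%N.
  by move: q_le1; rewrite def_q ler_pdivrMr ?ltr0n // mul1r ler_nat.
have [k1 [k2 [k1_le k2_le def_m]]] := decomp_leq_mul s_le m_le.
have [g1 [g1_gt def_k1]] := sum_jump_exp2 k1_le.
have [g2 [g2_gt def_k2]] := sum_jump_exp2 k2_le.
have ratr_sum_jump k g : k%:Z = \sum_(i < r.+1) jump g i * 2 ^+ i ->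
    k%:R = \sum_(i < r.+1) (jump g i)%:~R * 2 ^+ i :> rat.
  move=> /(congr1 (intmul (1 : rat))); rewrite -pmulrn rmorph_sum => ->.
  by apply: eq_bigr => i _; rewrite rmorphM rmorphXn.
exists (jump_proj r s g1 g2).
rewrite gstar_jump_proj ?gmul_jump_proj ?g1_gt ?g2_gt //; split=> //; split=> //; split.
  apply: (mulfI n_neq0); rewrite gtr_jump_proj // -(ratr_sum_jump _ _ def_k1).
  rewrite -(ratr_sum_jump _ _ def_k2) def_q mulrCA divff // mulr1 def_m.
  by rewrite natrD natrM natrB ?(odd_gt0 s_odd).
by move=> k; apply/intrP; rewrite ffunE jump_proj_integral.
Qed.
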